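(* For each $2$-cocycle $f = f_1 + f_2 + f_3 \in Z^2(\mathfrak{g},\mathfrak{z})$, there exists a decomposition $f_1 = f_1^0 + f_1^1$ into linear maps $f_1^0, f_1^1 \colon \Lambda^2(A) \otimes S^2(\mathfrak{k}) \to \mathfrak{z}$, where $$ f_1^0(\mathfrak{g},\mathfrak{g}') = \{0\}, \quad \operatorname{im}(\tilde f_1^1) \subseteq \operatorname{Sym}^2(\mathfrak{k},\mathfrak{z})^{\mathfrak{k}} \quad \mbox{ and } \quad T_0(A) \subseteq \ker \tilde f_1^1. $$
   Context: Let $A$ be a unital commutative associative algebra over a field $\mathbb{K}$ with $2 \in \mathbb{K}^\times$, $\mathfrak{k}$ a $\mathbb{K}$-Lie algebra, $\mathfrak{k}' := [\mathfrak{k},\mathfrak{k}]$, and $\mathfrak{g} := A \otimes \mathfrak{k}$ with bracket $[a \otimes x, a' \otimes x'] = aa' \otimes [x,x']$, so $\mathfrak{g}' = A \otimes \mathfrak{k}'$. Let $\mathfrak{z}$ be a vector space, viewed as a trivial $\mathfrak{g}$-module. Write $S^2(A) = (A \vee \mathbf{1}) \oplus I_A$, where $I_A$ is the kernel of the multiplication map $S^2(A) \to A$ and $A$ is identified with $A\vee\mathbf{1}$. There is a linear isomorphism $P=(p_1,p_2,p_3)\colon \Lambda^2(\mathfrak{g}) \to (\Lambda^2(A) \otimes S^2(\mathfrak{k})) \oplus (A \otimes \Lambda^2(\mathfrak{k})) \oplus (I_A \otimes \Lambda^2(\mathfrak{k}))$ with $p_1(ax\wedge by) = a\wedge b \otimes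 x\vee y$, $p_2(ax\wedge by) = ab\otimes x\wedge y$, $p_3(ax\wedge by) = (a\vee b - ab\vee \mathbf{1})\otimes x\wedge y$. Every alternating bilinear map $f\colon \Lambda^2(\mathfrak{g}) \to \mathfrak{z}$ is written $f = f_1\circ p_1 + f_2\circ p_2 + f_3 \circ p_3$ (abbreviated $f = f_1+f_2+f_3$) with linear maps $f_1 \colon \Lambda^2(A)\otimes S^2(\mathfrak{k}) \to \mathfrak{z}$, $f_2\colon A\otimes \Lambda^2(\mathfrak{k})\to\mathfrak{z}$, $f_3 \colon I_A\otimes\Lambda^2(\mathfrak{k})\to\mathfrak{z}$. For such a map $g$ on $\Lambda^2(A)\otimes S^2(\mathfrak{k})$, $\tilde g \colon A\times A \to \operatorname{Sym}^2(\mathfrak{k},\mathfrak{z})$ denotes the alternating map $\tilde g(a,b)(x,y) := g(a\wedge b\otimes x\vee y)$. $\operatorname{Sym}^2(\mathfrak{k},\mathfrak{z})^{\mathfrak{k}}$ is the space of invariant symmetric $\mathfrak{z}$-valued bilinear maps on $\mathfrak{k}$, and $T_0(A) := \operatorname{span}\{ab\wedge c + bc\wedge a + ca\wedge b - abc\wedge \mathbf{1} : a,b,c\in A\} \subseteq \Lambda^2(A)$. The condition $f_1^0(\mathfrak{g},\mathfrak{g}')=\{0\}$ means that $f_1^0\circ p_1$ vanishes on $\mathfrak{g}\times\mathfrak{g}'$. *)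

From HB Require Import structures.
From mathcomp Require Import all_boot all_order all_algebra.
Set Implicit Arguments. Unset Strict Implicit. Unset Printing Implicit Defensive.
Import GRing.Theory.
Local Open Scope ring_scope.

Section Defs.
Variable K : fieldType.

Definition lin (U V : lmodType K) (f : U -> V) : Prop :=
  forall (c : K) (u v : U), f (c *: u + v) = c *: f u + f v.

Definition is_lie_bracket (k : lmodType K) (br : k -> k -> k) : Prop :=
  [/\ forall y, lin (fun x => br x y),
      forall x, lin (fun y => br x y),
      forall x, br x x = 0 &
      forall x y w, br x (br y w) + br y (br w x) + br w (br x y) = 0].

(* A map  A -> A -> k -> k -> z  that is linear in each argument; such maps
   are exactly the linear maps  A (x) A (x) k (x) k -> z. *)
Definition multilin4 (A B k z : lmodType K) (F : A -> B -> k -> k -> z) : Prop :=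
  [/\ forall b x y, lin (fun a => F a b x y),
      forall a x y, lin (fun b => F a b x y),
      forall a b y, lin (fun x => F a b x y) &
      forall a b x, lin (fun y => F a b x y)].

(* Linear maps  Lambda^2(A) (x) S^2(k) -> z  ( = alternating maps
   A x A -> Sym^2(k,z), i.e. the "tilde" maps of the paper). *)
Definition LS_map (A k z : lmodType K) (G : A -> A -> k -> k -> z) : Prop :=
  [/\ multilin4 G,
      forall a x y, G a a x y = 0 &
      forall a b x y, G a b x y = G a b y x].

(* Linear maps  A (x) Lambda^2(k) -> z. *)
Definition AL_map (A k z : lmodType K) (G : A -> k -> k -> z) : Prop :=
  [/\ forall x y, lin (fun a => G a x y),
      forall a y, lin (fun x => G a x y),
      forall a x, lin (fun y => G a x y) &
      forall a x, G a x x = 0].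

(* Linear maps  S^2(A) (x) Lambda^2(k) -> z.  A linear map
   f3 : I_A (x) Lambda^2(k) -> z is the restriction of such a map H, via
   f3((a \/ b - ab \/ 1) (x) x /\ y) = H a b x y - H (ab) 1 x y. *)
Definition SL_map (A k z : lmodType K) (H : A -> A -> k -> k -> z) : Prop :=
  [/\ multilin4 H,
      forall a b x y, H a b x y = H b a x y &
      forall a b x, H a b x x = 0].

(* f = f1 o p1 + f2 o p2 + f3 o p3 evaluated at (a (x) x, b (x) y) in g = A (x) k. *)
Definition fval (A : comAlgType K) (k z : lmodType K)
  (G1 : A -> A -> k -> k -> z) (G2 : A -> k -> k -> z) (H3 : A -> A -> k -> k -> z)
  (a b : A) (x y : k) : z :=
  G1 a b x y + G2 (a * b) x y + (H3 a b x y - H3 (a * b) 1 x y).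

(* 2-cocycle condition for the trivial module z on g = A (x) k with bracket
   [a x, b y] = ab [x,y]:  f([u,v],w) + f([v,w],u) + f([w,u],v) = 0,
   checked on pure tensors u = a x, v = b y, w = c w' (suffices by
   multilinearity). *)
Definition is_cocycle (A : comAlgType K) (k z : lmodType K) (br : k -> k -> k)
  (f : A -> A -> k -> k -> z) : Prop :=
  forall (a b c : A) (x y w : k),
    f (a * b) c (br x y) w + f (b * c) a (br y w) x + f (c * a) b (br w x) y = 0.

Definition invariant_form (k z : lmodType K) (br : k -> k -> k) (beta : k -> k -> z) : Prop :=
  forall w x y, beta (br w x) y + beta x (br w y) = 0.

End Defs.

(* Choose a linear projection pi of k whose kernel contains k' = [k,k] and with
   x - pi x in k' (a complement of k' exists by Zorn's lemma), and split
   f1 = f1^0 + f1^1 with f1^0(a,b,x,y) := f1(a,b,pi x,pi y).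
   Comparing the cocycle identity at (a,b,1) with the one obtained by swapping x
   and y separates the parts of f antisymmetric and symmetric in (a,b): the first
   shows that every f1(a,b) is an invariant form, the second that f3 vanishes on
   I_A (x) ([k,k] /\ k).  Then f is f1 + f2 on [k,k] (x) k, and the cocycle
   identity at (a,b,c) and at (abc,1,1) gives f1(T_0(A) (x) ([k,k] \/ k)) = 0.
   Invariance passes to f1^1 since f1^0 kills [k,k].  For t in T_0(A) the
   symmetric form f1(t) vanishes on k' x k, so it only depends on pi x and pi y,
   i.e. f1(t) = f1^0(t) and f1^1(t) = 0. *)

From HB Require Import structures.
From mathcomp Require Import all_boot all_order all_algebra.
From mathcomp Require Import boolp classical_sets.
Import GRing.Theory.
Local Open Scope ring_scope.
Local Open Scope classical_set_scope.
Set Implicit Arguments. Unset Strict Implicit.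

Section ZmodIdentities.
Variable V : zmodType.

Lemma addrACA_eq0 (F p q r s : V) : F + p + q = 0 -> F + (p + r) + (q + s) = 0 -> r + s = 0.
Proof. by move=> e0; rewrite [F + _]addrA addrACA e0 add0r. Qed.

Lemma subrACA (p q r s : V) : (p - q) + (r - s) = (p + r) - (q + s).
Proof. by rewrite addrACA opprD. Qed.

Lemma addrACA3 (p1 q1 p2 q2 p3 q3 : V) :
  p1 + q1 + (p2 + q2) + (p3 + q3) = p1 + p2 + p3 + (q1 + q2 + q3).
Proof. by rewrite [_ + (p2 + q2)]addrACA (addrACA (p1 + p2)). Qed.

End ZmodIdentities.

Section LinearMaps.
Variables (K : fieldType) (U V W : lmodType K).

Lemma lin0 (f : U -> V) : lin f -> f 0 = 0.
Proof.
move=> /(_ 1 0 0); rewrite !scale1r addr0 => /esym/eqP.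
by rewrite -subr_eq0 addrK => /eqP.
Qed.

Lemma linD (f : U -> V) : lin f -> forall u v, f (u + v) = f u + f v.
Proof. by move=> hf u v; rewrite -{1}(scale1r u) hf scale1r. Qed.

Lemma linN (f : U -> V) : lin f -> forall u, f (- u) = - f u.
Proof. by move=> hf u; rewrite -[- u]addr0 -scaleN1r hf lin0 // addr0 scaleN1r. Qed.

Lemma lin_add (f g : U -> V) : lin f -> lin g -> lin (fun u => f u + g u).
Proof. by move=> hf hg c u v; rewrite hf hg scalerDr addrACA. Qed.

Lemma lin_sub (f g : U -> V) : lin f -> lin g -> lin (fun u => f u - g u).
Proof. by move=> hf hg c u v; rewrite hf hg opprD addrACA scalerBr. Qed.

Lemma lin_comp (f : V -> W) (g : U -> V) : lin f -> lin g -> lin (fun u => f (g u)).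
Proof. by move=> hf hg c u v; rewrite hg hf. Qed.

Lemma alternating_anti (F : U -> U -> V) u v :
  (forall v, lin (F^~ v)) -> (forall u, lin (F u)) -> (forall u, F u u = 0) ->
  F v u = - F u v.
Proof.
move=> hl hr halt; apply/eqP; rewrite -addr_eq0 addrC.
by have := halt (u + v); rewrite (linD (hl _)) !(linD (hr _)) !halt add0r addr0 => ->.
Qed.

Lemma twice_eq0 (v : V) : (2%:R : K) != 0 -> v *+ 2 = 0 -> v = 0.
Proof.
move=> two_neq0 v2.
by rewrite -[v]scale1r -(mulVf two_neq0) -scalerA scaler_nat v2 scaler0.
Qed.

Lemma cyclic_antisym_eq0 (T : Type) (t : T -> T -> T -> V) x y w :
  (2%:R : K) != 0 -> (forall x y w, t x y w + t y w x = 0) -> t x y w = 0.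
Proof.
move=> two_neq0 ht; apply: twice_eq0 => //.
have /eqP := ht y w x; have /eqP := ht w x y; rewrite !addr_eq0 => /eqP e1 /eqP e2.
by rewrite mulr2n -{2}(opprK (t x y w)) -e1 -e2 ht.
Qed.

End LinearMaps.

Section Subspaces.
Variables (K : fieldType) (V : lmodType K).

Definition lin_closed (W : set V) := forall c s t, W s -> W t -> W (c *: s + t).
Definition subspace (W : set V) := W 0 /\ lin_closed W.
Definition span (R : set V) : set V := fun s => forall W, subspace W -> R `<=` W -> W s.

Lemma subspaceZ W c s : subspace W -> W s -> W (c *: s).
Proof. by move=> [W0 Wcl] Ws; rewrite -[_ *: s]addr0; apply: Wcl. Qed.

Lemma subspaceB W s t : subspace W -> W s -> W t -> W (s - t).
Proof. by move=> [W0 Wcl] Ws Wt; rewrite addrC -scaleN1r; apply: Wcl. Qed.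

Lemma span_subspace R : subspace (span R).
Proof.
split=> [W [W0 _] _ //|c s t Rs Rt W W_subspace RW].
by case: (W_subspace) => _; apply; [apply: Rs | apply: Rt].
Qed.

Lemma sub_span R : R `<=` span R.
Proof. by move=> r Rr W _; apply. Qed.

Lemma lin_span_eq0 (U : lmodType K) (g : V -> U) R :
  lin g -> (forall r, R r -> g r = 0) -> forall s, span R s -> g s = 0.
Proof.
move=> hg gR s /(_ (fun s => g s = 0)); apply; last exact: gR.
by split=> [|c u v gu gv]; rewrite ?lin0 // hg gu gv scaler0 addr0.
Qed.

Variable S : set V.
Hypothesis S_subspace : subspace S.

Let trivial_meet (W : set V) := forall s, W s -> S s -> s = 0.

Lemma exists_maximal_trivial_meet : exists W, (lin_closed W /\ trivial_meet W) /\
  forall B, W `<` B -> ~ (lin_closed B /\ trivial_meet B).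
Proof.
apply: (@Zorn_bigcup _ (fun W => lin_closed W /\ trivial_meet W)) => F FP Ftot.
split.
  move=> c s t [X FX Xs] [Y FY Yt].
  have [XY|YX] := Ftot X Y FX FY.
    by exists Y => //; apply: (FP Y FY).1 => //; apply: XY.
  by exists X => //; apply: (FP X FX).1 => //; apply: YX.
by move=> s [X FX Xs]; apply: (FP X FX).2.
Qed.

Lemma exists_complement : exists W,
  [/\ subspace W, trivial_meet W & forall x, exists2 w, W w & S (x - w)].
Proof.
have [W [[Wcl Wmeet] Wmax]] := exists_maximal_trivial_meet.
have W0 : W 0.
  have [[w Ww]|W_empty] := pselect (exists w, W w).
    by have := Wcl (-1) w w Ww Ww; rewrite scaleN1r addNr.
  apply: contrapT => nW0; apply: (Wmax [set 0]).
    by split=> [w Ww|/(_ 0 erefl)//]; case: W_empty; exists w.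
  by split=> [c s t -> ->|s ->]; rewrite ?scaler0 ?addr0.
exists W; split=> // x; apply: contrapT => x_notin.
pose B := [set y | exists c w, W w /\ y = c *: x + w].
apply: (Wmax B); first split.
- by move=> w Ww; exists 0, w; rewrite scale0r add0r.
- move=> /(_ x) BW; apply: x_notin; exists x; last by rewrite subrr; case: S_subspace.
  by apply: BW; exists 1, 0; rewrite scale1r addr0.
split.
  move=> c _ _ [c1 [w1 [Ww1 ->]]] [c2 [w2 [Ww2 ->]]].
  exists (c * c1 + c2), (c *: w1 + w2); split; first exact: Wcl.
  by rewrite scalerDr scalerA scalerDl addrACA.
move=> _ [c [w [Ww ->]]] Ss; have [c0|c_neq0] := eqVneq c 0.
  by move: Ss; rewrite c0 scale0r add0r; apply: Wmeet.
case: x_notin; exists (- c^-1 *: w); first exact: subspaceZ.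
rewrite scaleNr opprK -[x](scalerK c_neq0) -scalerDr.
exact: subspaceZ.
Qed.

Lemma exists_projection_along : exists pi : V -> V,
  [/\ lin pi, forall s, S s -> pi s = 0 & forall x, S (x - pi x)].
Proof.
have [W [W_subspace Wmeet Wdec]] := exists_complement.
pose pi x := s2val (cid2 (Wdec x)).
have piW x : W (pi x) by rewrite /pi; case: cid2.
have piS x : S (x - pi x) by rewrite /pi; case: cid2.
have pi_unique x w : W w -> S (x - w) -> pi x = w.
  move=> Ww Sxw; apply/eqP; rewrite -subr_eq0; apply/eqP; apply: Wmeet.
    exact: subspaceB.
  have -> : pi x - w = (x - w) - (x - pi x) by rewrite opprB [RHS]addrC addrA subrK.
  exact: subspaceB.
exists pi; split=> [c u v|s Ss|//]; apply: pi_unique.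
- by case: W_subspace => _; apply.
- rewrite opprD addrACA -scalerBr.
  by case: S_subspace => _; apply.
- by case: W_subspace.
- by rewrite subr0.
Qed.

Lemma sym_form_proj (U : lmodType K) (D : V -> V -> U) (pi : V -> V) x y :
  (forall y, lin (D^~ y)) -> (forall x y, D x y = D y x) ->
  (forall s y, S s -> D s y = 0) -> (forall x, S (x - pi x)) ->
  D x y = D (pi x) (pi y).
Proof.
move=> Dlin DC DS piS.
have Dpi x' y' : D x' y' = D (pi x') y'.
  by rewrite -{1}[x'](subrK (pi x')) (linD (Dlin y')) DS // add0r.
by rewrite Dpi DC Dpi DC.
Qed.

End Subspaces.

Definition T0_sum (K : fieldType) (A : comAlgType K) (k z : lmodType K)
    (G : A -> A -> k -> k -> z) a b c x y :=
  G (a * b) c x y + G (b * c) a x y + G (c * a) b x y - G (a * b * c) 1 x y.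

Lemma T0_sumB (K : fieldType) (A : comAlgType K) (k z : lmodType K)
    (G G' : A -> A -> k -> k -> z) a b c x y :
  T0_sum (fun a b x y => G a b x y - G' a b x y) a b c x y =
  T0_sum G a b c x y - T0_sum G' a b c x y.
Proof.
by rewrite /T0_sum !subrACA !opprB !subrACA (addrC (G _ 1 x y)).
Qed.

Definition commutators (K : fieldType) (k : lmodType K) (br : k -> k -> k) : set k :=
  fun s => exists u v, s = br u v.

Section CocycleIdentities.
Variables (K : fieldType) (A : comAlgType K) (k z : lmodType K) (br : k -> k -> k).
Variables (G1 : A -> A -> k -> k -> z) (G2 : A -> k -> k -> z) (H3 : A -> A -> k -> k -> z).
Hypotheses (two_neq0 : (2%:R : K) != 0) (br_lie : is_lie_bracket br).
Hypotheses (G1_LS : LS_map G1) (G2_AL : AL_map G2) (H3_SL : SL_map H3).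
Hypothesis f_cocycle : is_cocycle br (fval G1 G2 H3).

Local Notation f := (fval G1 G2 H3).
Let h a b X Y := H3 a b X Y - H3 (a * b) 1 X Y.
Let m a b X Y := G2 (a * b) X Y + h a b X Y.

Lemma br_anti x y : br y x = - br x y.
Proof. by case: br_lie => brl brr brxx _; apply: alternating_anti. Qed.

Lemma G1_anti a b X Y : G1 b a X Y = - G1 a b X Y.
Proof.
case: G1_LS => [[G1a G1b _ _] G1alt _].
exact: (alternating_anti (F := fun a b => G1 a b X Y)).
Qed.

Lemma fvalNl a b X Y : f a b (- X) Y = - f a b X Y.
Proof.
case: G1_LS G2_AL H3_SL => [[_ _ G1x _] _ _] [_ G2x _ _] [[_ _ H3x _] _ _].
by rewrite /fval (linN (G1x _ _ _)) (linN (G2x _ _)) !(linN (H3x _ _ _)) !opprD.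
Qed.

Lemma fvalE a b X Y : f a b X Y = G1 a b X Y + m a b X Y.
Proof. by rewrite /fval /m /h -addrA. Qed.

Lemma fval_swap a b X Y : f b a X Y = - G1 a b X Y + m a b X Y.
Proof. by case: H3_SL => _ H3C _; rewrite fvalE G1_anti /m /h (mulrC b) H3C. Qed.

Lemma cocycle_swap23 a b c x y w :
  f (a * b) c (br x y) w + f (b * c) a (br w x) y + f (c * a) b (br y w) x = 0.
Proof.
have /eqP := f_cocycle a b c y x w.
by rewrite (br_anti x y) (br_anti w x) (br_anti y w) !fvalNl -!opprD oppr_eq0 => /eqP.
Qed.

Lemma fval_swap_sub a b X Y : f a b X Y - f b a X Y = G1 a b X Y *+ 2.
Proof. by rewrite fvalE fval_swap opprD opprK addrACA subrr addr0 mulr2n. Qed.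

Lemma G1_bracket_cyclic a b x y w : G1 a b (br w x) y = G1 a b (br y w) x.
Proof.
(* the difference of the two identities only involves f a b - f b a = 2 f1 *)
have e1 := f_cocycle a b 1 x y w; have e2 := cocycle_swap23 a b 1 x y w.
rewrite !mulr1 !mul1r in e1 e2.
move: (etrans e1 (esym e2)); rewrite -[LHS]addrA -[RHS]addrA => /addrI e.
apply/eqP; rewrite -subr_eq0; apply/eqP; apply: twice_eq0 => //.
apply/eqP; rewrite mulrnBl -!fval_swap_sub subr_eq0 subr_eq eq_sym addrAC subr_eq.
by rewrite addrC -e addrC.
Qed.

Lemma m_bracket_sum a b x y w :
  f (a * b) 1 (br x y) w + m a b (br y w) x + m a b (br w x) y = 0.
Proof.
have := f_cocycle a b 1 x y w.
rewrite !mulr1 mul1r (fval_swap a b) (fvalE a b) (G1_bracket_cyclic a b x y w).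
by rewrite -[in X in X = 0 -> _]addrA [- _ + _ + _]addrACA addNr add0r addrA.
Qed.

Lemma m_unit d X Y : m d 1 X Y = G2 d X Y.
Proof. by rewrite /m /h mulr1 subrr addr0. Qed.

Lemma H3_bracket a b x y w : H3 a b (br x y) w = H3 (a * b) 1 (br x y) w.
Proof.
(* m a b - m (a * b) 1 = h a b, and m_bracket_sum holds for both pairs *)
apply/eqP; rewrite -subr_eq0; apply/eqP.
apply: (cyclic_antisym_eq0 (t := fun x y w => h a b (br x y) w)) => // {}x {}y {}w.
have e0 := m_bracket_sum (a * b) 1 w x y; rewrite mulr1 !m_unit in e0.
exact: addrACA_eq0 e0 (m_bracket_sum a b w x y).
Qed.

Lemma fval_bracket p q x y Y : f p q (br x y) Y = G1 p q (br x y) Y + G2 (p * q) (br x y) Y.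
Proof. by rewrite /fval H3_bracket addrN addr0. Qed.

Lemma G1_T0_bracket a b c x y w : T0_sum G1 a b c (br x y) w = 0.
Proof.
rewrite /T0_sum.
have bca : b * c * a = a * b * c by rewrite mulrC mulrA.
have cab : c * a * b = a * b * c by rewrite -mulrA mulrC.
have /eqP := f_cocycle a b c x y w.
rewrite !fval_bracket bca cab (G1_bracket_cyclic (b * c) a w x y).
rewrite -(G1_bracket_cyclic (c * a) b y w x) addrACA3 addr_eq0 => /eqP ->.
have /eqP := f_cocycle (a * b * c) 1 1 x y w.
rewrite !fval_bracket !mulr1 !mul1r (G1_anti (a * b * c) 1).
rewrite (G1_bracket_cyclic _ _ w x y) -(G1_bracket_cyclic _ _ y w x).
by rewrite addrACA3 subrK addr_eq0 => /eqP ->; rewrite subrr.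
Qed.

Lemma G1_invariant a b : invariant_form br (G1 a b).
Proof.
move=> w x y; case: G1_LS => [[_ _ G1x _] _ G1C].
by rewrite (G1C a b x) (G1_bracket_cyclic a b y x w) (br_anti w x) (linN (G1x a b y)) addrN.
Qed.

Lemma G1_T0_proj (pi : k -> k) a b c x y :
  (forall x, span (commutators br) (x - pi x)) ->
  T0_sum G1 a b c x y = T0_sum G1 a b c (pi x) (pi y).
Proof.
case: G1_LS => [[_ _ G1x _] _ G1C] pi_proj.
have T0_lin y' : lin (fun s => T0_sum G1 a b c s y').
  by apply: lin_sub; [apply: lin_add; [apply: lin_add|]|]; apply: G1x.
apply: sym_form_proj pi_proj => // [x' y'|s y' s_derived].
  by rewrite /T0_sum !(G1C _ _ x').
apply: (lin_span_eq0 (T0_lin y')) s_derived => _ [u [v ->]].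
exact: G1_T0_bracket.
Qed.

End CocycleIdentities.

Section Decomposition.
Variables (K : fieldType) (A k z : lmodType K).

Lemma LS_mapB (G G' : A -> A -> k -> k -> z) :
  LS_map G -> LS_map G' -> LS_map (fun a b x y => G a b x y - G' a b x y).
Proof.
move=> [[Ga Gb Gx Gy] Galt GC] [[G'a G'b G'x G'y] G'alt G'C].
split; first split=> [b x y|a x y|a b y|a b x].
- exact: lin_sub (Ga b x y) (G'a b x y).
- exact: lin_sub (Gb a x y) (G'b a x y).
- exact: lin_sub (Gx a b y) (G'x a b y).
- exact: lin_sub (Gy a b x) (G'y a b x).
- by move=> a x y; rewrite Galt G'alt subrr.
- by move=> a b x y; rewrite GC G'C.
Qed.

Lemma LS_map_comp (G : A -> A -> k -> k -> z) (pi : k -> k) :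
  lin pi -> LS_map G -> LS_map (fun a b x y => G a b (pi x) (pi y)).
Proof.
move=> pi_lin [[Ga Gb Gx Gy] Galt GC].
split=> //; split=> // [a b y|a b x].
- exact: lin_comp (Gx a b (pi y)) pi_lin.
- exact: lin_comp (Gy a b (pi x)) pi_lin.
Qed.

End Decomposition.

Theorem corollary3p5 (K : fieldType) (A : comAlgType K) (k z : lmodType K)
  (br : k -> k -> k)
  (G1 : A -> A -> k -> k -> z) (G2 : A -> k -> k -> z) (H3 : A -> A -> k -> k -> z) :
  (2%:R : K) != 0 ->
  is_lie_bracket br ->
  LS_map G1 -> AL_map G2 -> SL_map H3 ->
  is_cocycle br (fval G1 G2 H3) ->
  exists G10 G11 : A -> A -> k -> k -> z,
    LS_map G10 /\ LS_map G11 /\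
        (forall a b x y, G1 a b x y = G10 a b x y + G11 a b x y) /\
        (* f1^0(g, g') = 0 ; g' = A (x) [k,k] is spanned by b (x) [u,v] *)
        (forall a b x u v, G10 a b x (br u v) = 0) /\
        (* im (tilde f1^1) is contained in Sym^2(k,z)^k *)
        (forall a b, invariant_form br (G11 a b)) /\
        (* T_0(A) is contained in ker (tilde f1^1) *)
        (forall (a b c : A) x y,
           G11 (a * b) c x y + G11 (b * c) a x y + G11 (c * a) b x y
           - G11 (a * b * c) 1 x y = 0).
Proof.
move=> two_neq0 br_lie G1_LS G2_AL H3_SL f_cocycle.
have G1_inv := G1_invariant two_neq0 br_lie G1_LS G2_AL H3_SL f_cocycle.
have G1_T0 := G1_T0_proj two_neq0 br_lie G1_LS G2_AL H3_SL f_cocycle.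
have [pi [pi_lin pi_derived pi_proj]] := exists_projection_along (span_subspace (commutators br)).
have pi_br u v : pi (br u v) = 0 by apply: pi_derived; apply: sub_span; exists u, v.
have [[_ _ G1x G1y] _ _] := G1_LS.
exists (fun a b x y => G1 a b (pi x) (pi y)), (fun a b x y => G1 a b x y - G1 a b (pi x) (pi y)).
split; first exact: LS_map_comp.
split; first exact: LS_mapB (LS_map_comp _ _).
split; first by move=> *; rewrite addrC subrK.
split; first by move=> a b x u v; rewrite pi_br (lin0 (G1y _ _ _)).
split=> [a b w x y|a b c x y].
  rewrite !pi_br (lin0 (G1x _ _ _)) (lin0 (G1y _ _ _)) !subr0.
  exact: G1_inv.
change (T0_sum (fun a b x y => G1 a b x y - G1 a b (pi x) (pi y)) a b c x y = 0).
by rewrite T0_sumB (G1_T0 pi) ?subrr.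
Qed.
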